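(* Let $a \in \mathcal R$ and let $J_a^L, J_a^R$, $M$ and $N$ be as defined in the context. For each $\alpha \in J_a^L$ the map $T_\alpha$ satisfies $T_\alpha^M(\alpha) = T_\alpha^N(1-\alpha)$, and for each $\alpha \in J_a^R$ the map $T_\alpha$ satisfies $T_\alpha^{M+1}(\alpha) = T_\alpha^{N-1}(1-\alpha)$.
   Context: $[a_1,a_2,\ldots]$ denotes the (finite or infinite) regular continued fraction $\cfrac{1}{a_1+\cfrac{1}{a_2+\cdots}}$ and an overline denotes a periodically repeated block. For $\alpha \in (0,1)$ let $D_\alpha = \bigcup_{n \ge 1} \big[ \frac{1}{n+\alpha}, \frac1n \big]$, $D_\alpha^{\mathsf c} = [0,1]\setminus D_\alpha$, $I_\alpha = [\min\{\alpha,1-\alpha\},1]$, and $T_\alpha : I_\alpha \to I_\alpha$, $T_\alpha(x) = \frac1x - \lfloor \frac1x \rfloor$ if $x \in D_\alpha^{\mathsf c}$, $T_\alpha(x) = 1 + \lfloor \frac1x \rfloor - \frac1x$ if $x \in D_\alpha$. Let $g=\frac{\sqrt5-1}{2}$. Each rational $a\in\mathbb Q\cap(0,1)$ has two expansions $a=[a_1,\ldots,a_n]=[a_1,\ldots,a_n-1,1]$ with $a_n\ge2$; its quadratic interval $I_a$ is the open interval with endpoints $[\overline{a_1,\ldots,a_n}]$ and $[\overline{a_1,\ldots,a_n-1,1}]$, and $I_1 := (g,1)$. A quadratic interval is maximal if it is not properly contained in any other quadratic interval, and $\mathcal R = \{a \in \mathbb Q\cap(0,1] : I_a \text{ is maximal}\}$.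 For $a=[a_1,\ldots,a_n]\in\mathcal R\setminus\{1\}$ with $a_n\ge2$: if $n$ is odd, $J_a^L = ([1,\overline{a_1,\ldots,a_n-1,1}],[1,a_1,\ldots,a_n-1,1])$, $J_a^R = ([1,a_1,\ldots,a_n],[1,\overline{a_1,\ldots,a_n}])$, $M = a_1+a_3+\cdots+a_n$, $N = a_2+a_4+\cdots+a_{n-1}+2$; if $n$ is even, $J_a^L = ([1,\overline{a_1,\ldots,a_n}],[1,a_1,\ldots,a_n])$, $J_a^R = ([1,a_1,\ldots,a_n-1,1],[1,\overline{a_1,\ldots,a_n-1,1}])$, $M = a_1+a_3+\cdots+a_{n-1}+1$, $N = a_2+a_4+\cdots+a_n+1$. For $a=1$: $J_1^L=\emptyset$, $J_1^R=(\frac12,g)$, $M=1$, $N=2$. *)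

From Stdlib Require Import Reals Lra List ClassicalEpsilon QArith.
From Coquelicot Require Import Coquelicot.

Open Scope R_scope.

(* Finite continued fraction with a real tail:
   cf_tail [a1;...;an] x = 1/(a1 + 1/(a2 + ... 1/(an + x))). *)
Definition cf_tail (l : list nat) (x : R) : R :=
  fold_right (fun a y => / (INR a + y)) x l.

Definition cf_fin (l : list nat) : R := cf_tail l 0.

Definition cf_inf (s : nat -> nat) : R :=
  real (Lim_seq (fun n => cf_fin (map s (List.seq 0 n)))).

Definition cf_per (b : list nat) : R :=
  cf_inf (fun k => nth (Nat.modulo k (length b)) b 0%nat).

Definition valid_cf (l : list nat) : Prop :=
  l <> nil /\ List.Forall (fun a => (1 <= a)%nat) l /\ (2 <= last l 0)%nat.

Definition alt_cf (l : list nat) : list nat :=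
  removelast l ++ ((last l 0 - 1)%nat :: 1%nat :: nil).

Definition open_between (x y t : R) : Prop := Rmin x y < t < Rmax x y.

Definition gold : R := (sqrt 5 - 1) / 2.

Definition is_rat (a : R) : Prop := exists q : Q, Q2R q = a.

Definition quad_dom (a : R) : Prop := is_rat a /\ 0 < a <= 1.

Definition qint (a : R) (t : R) : Prop :=
  if Req_EM_T a 1 then gold < t < 1
  else exists l, valid_cf l /\ cf_fin l = a /\
         open_between (cf_per l) (cf_per (alt_cf l)) t.

Definition in_calR (a : R) : Prop :=
  quad_dom a /\
  forall b, quad_dom b ->
    (forall t, qint a t -> qint b t) -> (forall t, qint b t -> qint a t).

Definition cf1_fin (b : list nat) : R := cf_fin (1%nat :: b).
Definition cf1_per (b : list nat) : R := cf_tail (1%nat :: nil) (cf_per b).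

Definition JL (l : list nat) (t : R) : Prop :=
  if Nat.odd (length l)
  then open_between (cf1_per (alt_cf l)) (cf1_fin (alt_cf l)) t
  else open_between (cf1_per l) (cf1_fin l) t.

Definition JR (l : list nat) (t : R) : Prop :=
  if Nat.odd (length l)
  then open_between (cf1_fin l) (cf1_per l) t
  else open_between (cf1_fin (alt_cf l)) (cf1_per (alt_cf l)) t.

(* (sum of a1,a3,a5,..., sum of a2,a4,...) *)
Fixpoint sum_alt (l : list nat) : nat * nat :=
  match l with
  | nil => (0%nat, 0%nat)
  | a :: r => let (s1, s2) := sum_alt r in ((a + s2)%nat, s1)
  end.

Definition M_of (l : list nat) : nat :=
  if Nat.odd (length l) then fst (sum_alt l) else (fst (sum_alt l) + 1)%nat.

Definition N_of (l : list nat) : nat :=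
  if Nat.odd (length l) then (snd (sum_alt l) + 2)%nat else (snd (sum_alt l) + 1)%nat.

Definition inD (alpha x : R) : Prop :=
  exists n : nat, (1 <= n)%nat /\ / (INR n + alpha) <= x <= / INR n.

Definition flo (x : R) : R := IZR (Int_part x).

Definition T (alpha x : R) : R :=
  if excluded_middle_informative (inD alpha x)
  then 1 + flo (/ x) - / x
  else / x - flo (/ x).

Definition Titer (alpha : R) (k : nat) (x : R) : R := Nat.iter k (T alpha) x.

From Stdlib Require Import Reals List.
From Stdlib Require Import Lra Lia QArith Qreals ClassicalEpsilon.
From Coquelicot Require Import Coquelicot.
Open Scope R_scope.

(* Write alpha = [1, W, tau], where W is one of the two expansions of a and tau lies between
   0 and the periodic point [overline W]; this parametrises J_a^L and J_a^R. Under T_alpha a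
   digit d >= 2 is lowered by a flip, [c, d, ...] -> [1, d - 1, ...], and a digit 1 is absorbed
   by a flip, [c, 1, e, ...] -> [e + 1, ...]. As 1 - alpha = [w_1 + 1, w_2, ..., tau], the orbits
   of alpha and of 1 - alpha both reach 1 - tau, after (sum of the odd-indexed digits) + 1 and
   (sum of the even-indexed digits) + 1 steps, provided every one of these flips happens. This
   holds when no tail [w_(k+1), ..., tau] falls below the periodic point of the prefix
   [overline w_1, ..., w_k]; a falling tail would make the quadratic interval of that prefix
   strictly contain I_a, contradicting maximality. *)

(** * Continued fractions with a real tail *)

Definition pos_digits (l : list nat) : Prop := List.Forall (fun a => (1 <= a)%nat) l.

Lemma cf_tail_cons a l x : cf_tail (a :: l) x = / (INR a + cf_tail l x).
Proof. reflexivity. Qed.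

Lemma cf_tail_app l1 l2 x : cf_tail (l1 ++ l2) x = cf_tail l1 (cf_tail l2 x).
Proof. apply fold_right_app. Qed.

Lemma pos_digits_cons a l : pos_digits (a :: l) <-> (1 <= a)%nat /\ pos_digits l.
Proof. unfold pos_digits; split; [inversion 1; auto | intros []; constructor; auto]. Qed.

Lemma pos_digits_app l1 l2 : pos_digits (l1 ++ l2) <-> pos_digits l1 /\ pos_digits l2.
Proof. apply List.Forall_app. Qed.

Lemma pos_digits_firstn k l : pos_digits l -> pos_digits (firstn k l).
Proof. rewrite <- (firstn_skipn k l) at 1. now intros [? _]%pos_digits_app. Qed.

Lemma pos_digits_skipn k l : pos_digits l -> pos_digits (skipn k l).
Proof. rewrite <- (firstn_skipn k l) at 1. now intros [_ ?]%pos_digits_app. Qed.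

Lemma one_le_INR a : (1 <= a)%nat -> 1 <= INR a.
Proof. intro H. exact (le_INR 1 a H). Qed.

Lemma two_le_INR a : (2 <= a)%nat -> 2 <= INR a.
Proof. intro H. exact (le_INR 2 a H). Qed.

Lemma cf_tail_nonneg l x : pos_digits l -> 0 <= x -> 0 <= cf_tail l x.
Proof.
  induction l as [|a l IH]; intros HD Hx; [exact Hx|].
  apply pos_digits_cons in HD as [Ha HD].
  pose proof (IH HD Hx). pose proof (one_le_INR a Ha).
  rewrite cf_tail_cons. left. apply Rinv_0_lt_compat. lra.
Qed.

Lemma cf_tail_cons_bounds a l x : (1 <= a)%nat -> pos_digits l -> 0 <= x ->
  0 < cf_tail (a :: l) x <= / INR a.
Proof.
  intros Ha HD Hx. pose proof (cf_tail_nonneg l x HD Hx). pose proof (one_le_INR a Ha).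
  rewrite cf_tail_cons. split; [apply Rinv_0_lt_compat | apply Rinv_le_contravar]; lra.
Qed.

Lemma cf_tail_pos l x : pos_digits l -> 0 < x -> 0 < cf_tail l x.
Proof.
  destruct l as [|a l]; intros HD Hx; [exact Hx|].
  apply pos_digits_cons in HD as [Ha HD]. apply cf_tail_cons_bounds; auto; lra.
Qed.

Lemma cf_tail_pos_nonempty l x : pos_digits l -> l <> nil -> 0 <= x -> 0 < cf_tail l x.
Proof.
  destruct l as [|a l]; intros HD Hne Hx; [congruence|].
  apply pos_digits_cons in HD as [Ha HD]. apply cf_tail_cons_bounds; auto.
Qed.

Lemma cf_tail_le_1 l x : pos_digits l -> 0 <= x <= 1 -> cf_tail l x <= 1.
Proof.
  destruct l as [|a l]; intros HD Hx; [simpl; lra|].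
  apply pos_digits_cons in HD as [Ha HD].
  pose proof (cf_tail_cons_bounds a l x Ha HD ltac:(lra)).
  assert (/ INR a <= 1) by (rewrite <- Rinv_1; apply Rinv_le_contravar, one_le_INR; auto; lra).
  lra.
Qed.

Lemma cf_tail_lt_1 l x : pos_digits l -> 0 < x < 1 -> cf_tail l x < 1.
Proof.
  destruct l as [|a l]; intros HD Hx; [simpl; lra|].
  apply pos_digits_cons in HD as [Ha HD]. pose proof (one_le_INR a Ha).
  pose proof (cf_tail_pos l x HD ltac:(lra)).
  rewrite cf_tail_cons, <- Rinv_1. apply Rinv_lt_contravar; lra.
Qed.

Lemma cf_tail_strict l x y : pos_digits l -> 0 <= x < y ->
  if Nat.even (length l) then cf_tail l x < cf_tail l y else cf_tail l y < cf_tail l x.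
Proof.
  induction l as [|a l IH]; intros HD Hxy; [simpl; lra|].
  apply pos_digits_cons in HD as [Ha HD]. specialize (IH HD Hxy).
  pose proof (one_le_INR a Ha).
  pose proof (cf_tail_nonneg l x HD ltac:(lra)). pose proof (cf_tail_nonneg l y HD ltac:(lra)).
  rewrite !cf_tail_cons. cbn [length]. rewrite Nat.even_succ, <- Nat.negb_even.
  destruct (Nat.even (length l)); apply Rinv_lt_contravar; nra.
Qed.

Definition between (a b c : R) : Prop := a < c < b \/ b < c < a.

Lemma between_sym a b c : between a b c -> between b a c.
Proof. unfold between; tauto. Qed.

Lemma open_between_iff x y t : open_between x y t <-> between x y t.
Proof. unfold open_between, between, Rmin, Rmax. destruct (Rle_dec x y); lra. Qed.

Lemma between_increasing (f : R -> R) x y z :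
  (forall u v, 0 <= u < v -> f u < f v) -> 0 <= x -> 0 <= y -> 0 <= z ->
  between x y z <-> between (f x) (f y) (f z).
Proof.
  intros Hf Hx Hy Hz.
  assert (Hr : forall u v, 0 <= u -> 0 <= v -> f u < f v -> u < v).
  { intros u v Hu Hv H. destruct (Rtotal_order u v) as [|[->|Hvu]]; [auto|lra|].
    specialize (Hf v u (conj Hv Hvu)). lra. }
  unfold between. split; intros [[h1 h2]|[h1 h2]].
  - left; split; apply Hf; lra.
  - right; split; apply Hf; lra.
  - left; split; apply Hr; auto.
  - right; split; apply Hr; auto.
Qed.

Lemma cf_tail_between l x y z : pos_digits l -> 0 <= x -> 0 <= y -> 0 <= z ->
  between x y z <-> between (cf_tail l x) (cf_tail l y) (cf_tail l z).
Proof.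
  intros HD Hx Hy Hz. pose proof (cf_tail_strict l) as Hs.
  destruct (Nat.even (length l)).
  - exact (between_increasing _ x y z (fun u v Huv => Hs u v HD Huv) Hx Hy Hz).
  - rewrite (between_increasing (fun u => - cf_tail l u) x y z); auto.
    + unfold between. lra.
    + intros u v Huv. specialize (Hs u v HD Huv). simpl in Hs. lra.
Qed.

Lemma between_inv a b x : 0 < a -> 0 < b -> between (/ a) (/ b) x -> between a b (/ x).
Proof.
  intros Ha Hb. pose proof (Rinv_0_lt_compat a Ha). pose proof (Rinv_0_lt_compat b Hb).
  unfold between. intros [[h1 h2]|[h1 h2]]; [right|left];
  rewrite <- (Rinv_inv a), <- (Rinv_inv b); split; apply Rinv_lt_contravar; nra.
Qed.

Lemma cf_tail_ivt l s t x : pos_digits l -> 0 <= s < t ->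
  between (cf_tail l s) (cf_tail l t) x -> exists y, s < y < t /\ cf_tail l y = x.
Proof.
  revert x. induction l as [|a l IH]; intros x HD Hst Hb.
  - exists x. split; [unfold between in Hb; simpl in Hb; lra | reflexivity].
  - apply pos_digits_cons in HD as [Ha HD]. pose proof (one_le_INR a Ha).
    pose proof (cf_tail_nonneg l s HD ltac:(lra)). pose proof (cf_tail_nonneg l t HD ltac:(lra)).
    rewrite !cf_tail_cons in Hb. apply between_inv in Hb; [|lra|lra].
    destruct (IH (/ x - INR a) HD Hst) as [y [Hy Ey]]; [unfold between in *; lra|].
    exists y. split; auto. rewrite cf_tail_cons, Ey.
    replace (INR a + (/ x - INR a)) with (/ x) by ring. apply Rinv_inv.
Qed.

(** * Periodic points *)

Fixpoint cf_mobius (l : list nat) : R * R * R * R :=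
  match l with
  | nil => (1, 0, 0, 1)
  | a :: l' => let '(p, q, r, s) := cf_mobius l' in (r, s, INR a * r + p, INR a * s + q)
  end.

Lemma cf_mobius_spec l : pos_digits l -> l <> nil -> let '(p, q, r, s) := cf_mobius l in
  0 <= p /\ 0 < q /\ 0 < r /\ 0 < s /\
  forall x, 0 <= x -> cf_tail l x = (p * x + q) / (r * x + s).
Proof.
  intro HD. induction HD as [|a l Ha HD IH]; intros Hne; [congruence|].
  pose proof (one_le_INR a Ha). simpl.
  destruct l as [|b l].
  - simpl. repeat split; try lra. intros x Hx. field. lra.
  - destruct (cf_mobius (b :: l)) as [[[p q] r] s].
    destruct (IH ltac:(congruence)) as (Hp & Hq & Hr & Hs & Hf).
    repeat split; try nra.
    intros x Hx. change (cf_tail (a :: b :: l) x) with (/ (INR a + cf_tail (b :: l) x)).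
    rewrite Hf by auto.
    assert (0 < r * x + s) by nra.
    field. split; nra.
Qed.

Lemma mobius_sub_id p q r s x : 0 <= p -> 0 < q -> 0 < r -> 0 < s -> 0 <= x ->
  let e := (p - s + sqrt ((p - s) ^ 2 + 4 * r * q)) / (2 * r) in
  0 < e /\ exists c, 0 < c /\ (p * x + q) / (r * x + s) - x = c * (e - x).
Proof.
  intros Hp Hq Hr Hs Hx e.
  set (d := (p - s) ^ 2 + 4 * r * q).
  set (sq := sqrt d).
  assert (Hsq : sq * sq = d).
  { apply sqrt_sqrt. unfold d. pose proof (pow2_ge_0 (p - s)). pose proof (Rmult_lt_0_compat r q Hr Hq). lra. }
  assert (Hsq0 : 0 <= sq) by apply sqrt_pos.
  assert (Habs : p - s < sq /\ s - p < sq).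
  { unfold d in Hsq. assert (0 < r * q) by nra.
    split; apply Rnot_le_lt; intro Hle; assert (sq * sq <= (p - s) ^ 2) by nra; lra. }
  set (e' := (p - s - sq) / (2 * r)).
  assert (He' : e' < 0).
  { unfold e', Rdiv. assert (0 < / (2 * r)) by (apply Rinv_0_lt_compat; lra). nra. }
  split.
  - unfold e. fold d sq. apply Rdiv_lt_0_compat; lra.
  - assert (Hroots : p * x + q - x * (r * x + s) = r * (x - e') * (e - x)).
    { unfold e, e'. fold d sq. field_simplify_eq; [|lra].
      replace (sq ^ 2) with d by (rewrite <- Hsq; ring). unfold d. ring. }
    exists (r * (x - e') / (r * x + s)). split.
    + apply Rdiv_lt_0_compat; nra.
    + replace ((p * x + q) / (r * x + s) - x) with ((p * x + q - x * (r * x + s)) / (r * x + s))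
        by (field; nra).
      rewrite Hroots. field. nra.
Qed.

Definition cf_fix (l : list nat) : R :=
  let '(p, q, r, s) := cf_mobius l in (p - s + sqrt ((p - s) ^ 2 + 4 * r * q)) / (2 * r).

Lemma cf_fix_spec l : pos_digits l -> l <> nil ->
  0 < cf_fix l /\
  forall x, 0 <= x -> exists c, 0 < c /\ cf_tail l x - x = c * (cf_fix l - x).
Proof.
  intros HD Hne. pose proof (cf_mobius_spec l HD Hne) as Hm. unfold cf_fix.
  destruct (cf_mobius l) as [[[p q] r] s]. destruct Hm as (Hp & Hq & Hr & Hs & Hf).
  split; [apply (mobius_sub_id p q r s 0); lra|].
  intros x Hx. rewrite Hf by exact Hx. apply mobius_sub_id; lra.
Qed.

Section FixedPoint.
Variable l : list nat.
Hypothesis HD : pos_digits l.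
Hypothesis Hne : l <> nil.

Lemma cf_fix_pos : 0 < cf_fix l.
Proof. apply (cf_fix_spec l HD Hne). Qed.

Lemma cf_fix_eq : cf_tail l (cf_fix l) = cf_fix l.
Proof.
  destruct (cf_fix_spec l HD Hne) as [He Hc].
  destruct (Hc (cf_fix l)) as [c [_ Ec]]; [lra|]. lra.
Qed.

Lemma cf_fix_unique x : 0 <= x -> cf_tail l x = x -> x = cf_fix l.
Proof.
  intros Hx Efx. destruct (proj2 (cf_fix_spec l HD Hne) x Hx) as [c [Hc Ec]].
  rewrite Efx in Ec. nra.
Qed.

Lemma lt_cf_tail_iff x : 0 <= x -> x < cf_tail l x <-> x < cf_fix l.
Proof.
  intros Hx. destruct (proj2 (cf_fix_spec l HD Hne) x Hx) as [c [Hc Ec]].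
  split; intro H; nra.
Qed.

Lemma cf_tail_lt_iff x : 0 <= x -> cf_tail l x < x <-> cf_fix l < x.
Proof.
  intros Hx. destruct (proj2 (cf_fix_spec l HD Hne) x Hx) as [c [Hc Ec]].
  split; intro H; nra.
Qed.

Lemma cf_fix_lt_1 : cf_fix l < 1.
Proof.
  pose proof cf_fix_pos. rewrite <- cf_fix_eq.
  destruct l as [|a l']; [congruence|]. apply pos_digits_cons in HD as [Ha HD'].
  pose proof (cf_tail_pos l' (cf_fix (a :: l')) HD' H). pose proof (one_le_INR a Ha).
  rewrite cf_tail_cons, <- Rinv_1. apply Rinv_lt_contravar; lra.
Qed.

End FixedPoint.

Lemma skipn_nth_cons {A} (d : A) i (W : list A) : (i < length W)%nat ->
  skipn i W = nth i W d :: skipn (S i) W.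
Proof.
  revert i. induction W as [|a W IH]; intros [|i] Hi; simpl in *; try lia; auto.
  apply IH. lia.
Qed.

Lemma cf_tail_pair_contract a b u v : (1 <= a)%nat -> (1 <= b)%nat ->
  0 <= u <= 1 -> 0 <= v <= 1 ->
  Rabs (cf_tail (a :: b :: nil) u - cf_tail (a :: b :: nil) v) <= Rabs (u - v) / 4.
Proof.
  intros Ha Hb Hu Hv. pose proof (one_le_INR a Ha). pose proof (one_le_INR b Hb).
  simpl. set (A := INR a) in *. set (B := INR b) in *.
  assert (Hu2 : 2 <= A * (B + u) + 1) by nra. assert (Hv2 : 2 <= A * (B + v) + 1) by nra.
  assert (Hd : 4 <= (A * (B + u) + 1) * (A * (B + v) + 1)) by nra.
  replace (/ (A + / (B + u)) - / (A + / (B + v)))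
    with ((u - v) / ((A * (B + u) + 1) * (A * (B + v) + 1))) by (field; repeat split; nra).
  unfold Rdiv. rewrite Rabs_mult, Rabs_inv, (Rabs_right (_ * _)) by lra.
  apply Rmult_le_compat_l; [apply Rabs_pos|]. apply Rinv_le_contravar; lra.
Qed.

Lemma cf_tail_dist_le U x y : pos_digits U -> 0 <= x <= 1 -> 0 <= y <= 1 ->
  Rabs (cf_tail U x - cf_tail U y) <= 2 * (/ 2) ^ length U.
Proof.
  intros HD Hx Hy. remember (length U) as n eqn:En. revert U En HD.
  induction n as [n IH] using (well_founded_induction Wf_nat.lt_wf).
  intros U En HD. subst n.
  assert (Hbound : forall V z, pos_digits V -> 0 <= z <= 1 -> 0 <= cf_tail V z <= 1).
  { intros V z HV Hz. split; [apply cf_tail_nonneg | apply cf_tail_le_1]; auto; lra. }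
  destruct U as [|a [|b U]].
  - simpl. apply Rabs_le. lra.
  - pose proof (Hbound _ x HD Hx). pose proof (Hbound _ y HD Hy).
    simpl length. apply Rabs_le. lra.
  - apply pos_digits_cons in HD as [Ha HD]. apply pos_digits_cons in HD as [Hb HD].
    change (a :: b :: U) with ((a :: b :: nil) ++ U). rewrite !cf_tail_app.
    eapply Rle_trans; [apply cf_tail_pair_contract; auto|].
    specialize (IH (length U) ltac:(simpl; lia) U eq_refl HD).
    rewrite length_app. simpl length. simpl pow. lra.
Qed.

Lemma periodic_convergent_dist W n : pos_digits W -> W <> nil ->
  Rabs (cf_fin (map (fun k => nth (k mod length W) W 0%nat) (seq 0 n)) - cf_fix W)
    <= 2 * (/ 2) ^ n.
Proof.
  intros HD Hne.
  set (m := length W). set (s := fun k => nth (k mod m) W 0%nat). set (e := cf_fix W).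
  assert (Hm : (0 < m)%nat) by (destruct W; simpl in *; [congruence|lia]).
  (* t r is the value of the periodic expansion shifted by r digits *)
  set (t := fun r => cf_tail (skipn (r mod m) W) e).
  assert (Hsucc : forall r,
    (S r mod m = if Nat.eq_dec (S (r mod m)) m then 0 else S (r mod m))%nat).
  { intro r. rewrite <- Nat.add_1_r, <- Nat.Div0.add_mod_idemp_l, Nat.add_1_r.
    destruct (Nat.eq_dec (S (r mod m)) m) as [E|E].
    - rewrite E. apply Nat.Div0.mod_same.
    - apply Nat.mod_small. pose proof (Nat.mod_upper_bound r m). lia. }
  assert (Ht : forall r, t r = / (INR (s r) + t (S r))).
  { intro r. unfold t, s. rewrite Hsucc.
    assert (Hi : (r mod m < m)%nat) by (apply Nat.mod_upper_bound; lia).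
    rewrite (skipn_nth_cons 0%nat) by exact Hi. rewrite cf_tail_cons.
    destruct (Nat.eq_dec (S (r mod m)) m) as [E|E]; [|reflexivity].
    rewrite E. unfold m. rewrite skipn_all. simpl. unfold e. rewrite cf_fix_eq; auto. }
  assert (Hrec : forall n r, cf_tail (map s (seq r n)) (t (r + n)%nat) = t r).
  { intro k. induction k as [|k IHk]; intro r; simpl.
    - now rewrite Nat.add_0_r.
    - rewrite (Ht r), <- (IHk (S r)). now replace (r + S k)%nat with (S r + k)%nat by lia. }
  assert (Hs : pos_digits (map s (seq 0 n))).
  { apply List.Forall_forall. intros a Ha. apply in_map_iff in Ha as [k [<- _]].
    eapply List.Forall_forall; [exact HD|]. apply nth_In, Nat.mod_upper_bound. lia. }
  pose proof (cf_fix_pos W HD Hne). pose proof (cf_fix_lt_1 W HD Hne).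
  assert (Ht0 : t 0%nat = e) by (unfold t; rewrite Nat.Div0.mod_0_l; apply cf_fix_eq; auto).
  assert (Htn : 0 <= t n <= 1).
  { unfold t. split; [apply cf_tail_nonneg | apply cf_tail_le_1];
      try apply pos_digits_skipn; auto; unfold e; lra. }
  unfold cf_fin. rewrite <- Ht0, <- (Hrec n 0%nat).
  pose proof (cf_tail_dist_le _ 0 (t n) Hs ltac:(lra) Htn) as Hd.
  rewrite length_map, length_seq in Hd. exact Hd.
Qed.

Lemma is_lim_seq_geom_bound (u : nat -> R) e :
  (forall n, Rabs (u n - e) <= 2 * (/ 2) ^ n) -> is_lim_seq u e.
Proof.
  intro Hb.
  assert (G : is_lim_seq (fun n => 2 * (/ 2) ^ n) 0).
  { replace (Finite 0) with (Rbar_mult 2 0) by (simpl; f_equal; ring).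
    apply is_lim_seq_scal_l, is_lim_seq_geom. rewrite Rabs_right; lra. }
  apply is_lim_seq_le_le with (u := fun n => e - 2 * (/ 2) ^ n) (w := fun n => e + 2 * (/ 2) ^ n).
  - intro n. specialize (Hb n). apply Rabs_le_between in Hb. lra.
  - replace (Finite e) with (Rbar_minus e 0) by (simpl; f_equal; ring).
    apply is_lim_seq_minus'; auto using is_lim_seq_const.
  - replace (Finite e) with (Rbar_plus e 0) by (simpl; f_equal; ring).
    apply is_lim_seq_plus'; auto using is_lim_seq_const.
Qed.

Lemma cf_per_eq_fix W : pos_digits W -> W <> nil -> cf_per W = cf_fix W.
Proof.
  intros HD Hne. unfold cf_per, cf_inf.
  rewrite (is_lim_seq_unique _ _ (is_lim_seq_geom_bound _ _ (fun n => periodic_convergent_dist W n HD Hne))).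
  reflexivity.
Qed.

(** * Orbits of T_alpha on continued fractions *)

Lemma flo_INR_plus c f : 0 <= f < 1 -> flo (INR c + f) = INR c.
Proof.
  intro Hf. unfold flo. rewrite <- (Int_part_spec (INR c + f) (Z.of_nat c)).
  - symmetry. apply INR_IZR_INZ.
  - rewrite <- INR_IZR_INZ. lra.
Qed.

Lemma T_inv a c f : 0 < a < 1 -> (1 <= c)%nat -> 0 <= f < 1 ->
  T a (/ (INR c + f)) = if Rle_dec f a then 1 - f else f.
Proof.
  intros Ha Hc Hf. pose proof (one_le_INR c Hc).
  unfold T. rewrite Rinv_inv, flo_INR_plus by exact Hf.
  destruct (excluded_middle_informative (inD a (/ (INR c + f)))) as [[n [Hn [I1 I2]]]|I];
    destruct (Rle_dec f a) as [L|L]; try ring; exfalso.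
  - pose proof (one_le_INR n Hn).
    apply Rinv_le_contravar in I1; [|apply Rinv_0_lt_compat; lra].
    apply Rinv_le_contravar in I2; [|apply Rinv_0_lt_compat; lra].
    rewrite !Rinv_inv in I1, I2.
    assert (Hcn : INR c < INR n < INR (c + 1)) by (rewrite plus_INR; simpl; lra).
    destruct Hcn as [H1 H2]. apply INR_lt in H1, H2. lia.
  - apply I. exists c. split; [exact Hc|]. split; apply Rinv_le_contravar; lra.
Qed.

Lemma T_inv_le a c f : 0 < a < 1 -> (1 <= c)%nat -> 0 <= f < 1 -> f <= a ->
  T a (/ (INR c + f)) = 1 - f.
Proof. intros. rewrite T_inv by auto. destruct (Rle_dec f a); lra. Qed.

Lemma T_inv_gt a c f : 0 < a < 1 -> (1 <= c)%nat -> 0 <= f < 1 -> a < f ->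
  T a (/ (INR c + f)) = f.
Proof. intros. rewrite T_inv by auto. destruct (Rle_dec f a); lra. Qed.

Lemma Titer_S a n x : Titer a (S n) x = Titer a n (T a x).
Proof. apply Nat.iter_succ_r. Qed.

Lemma Titer_add a n m x : Titer a (n + m) x = Titer a n (Titer a m x).
Proof. apply Nat.iter_add. Qed.

Section Orbit.
Variables (a tau : R).
Hypothesis Ha : 1 / 2 < a < 1.
Hypothesis Htau : 0 < tau < 1.

Lemma T_cf_reduce c d L : (1 <= c)%nat -> (2 <= d)%nat -> pos_digits L ->
  T a (cf_tail (c :: d :: L) tau) = cf_tail (1%nat :: (d - 1)%nat :: L) tau.
Proof.
  intros Hc Hd HL. pose proof (cf_tail_pos L tau HL ltac:(lra)). pose proof (two_le_INR d Hd).
  pose proof (cf_tail_cons_bounds d L tau ltac:(lia) HL ltac:(lra)).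
  assert (/ INR d <= / 2) by (apply Rinv_le_contravar; lra).
  rewrite cf_tail_cons, T_inv_le by (auto; lra).
  rewrite !cf_tail_cons, minus_INR by lia. simpl. field. lra.
Qed.

Lemma T_cf_merge c e L : (1 <= c)%nat -> (1 <= e)%nat -> pos_digits L ->
  cf_tail (1%nat :: e :: L) tau <= a ->
  T a (cf_tail (c :: 1%nat :: e :: L) tau) = cf_tail ((e + 1)%nat :: L) tau.
Proof.
  intros Hc He HL Hle. pose proof (cf_tail_pos L tau HL ltac:(lra)). pose proof (one_le_INR e He).
  assert (HD : pos_digits (1%nat :: e :: L)) by (repeat constructor; auto).
  pose proof (cf_tail_pos _ tau HD ltac:(lra)). pose proof (cf_tail_lt_1 _ tau HD Htau).
  rewrite cf_tail_cons, T_inv_le by (auto; lra).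
  rewrite !cf_tail_cons, plus_INR. simpl.
  assert (0 < / (INR e + cf_tail L tau)) by (apply Rinv_0_lt_compat; lra).
  field. split; lra.
Qed.

Lemma T_cf_keep c : (1 <= c)%nat -> a < cf_tail (1%nat :: nil) tau ->
  T a (cf_tail (c :: 1%nat :: nil) tau) = cf_tail (1%nat :: nil) tau.
Proof.
  intros Hc Hlt. assert (HD : pos_digits (1%nat :: nil)) by repeat constructor.
  pose proof (cf_tail_pos _ tau HD ltac:(lra)). pose proof (cf_tail_lt_1 _ tau HD Htau).
  rewrite cf_tail_cons. apply T_inv_gt; auto; lra.
Qed.

Lemma T_cf_last c : (1 <= c)%nat -> tau <= a -> T a (cf_tail (c :: nil) tau) = 1 - tau.
Proof. intros Hc Hle. apply T_inv_le; auto; lra. Qed.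

Lemma Titer_cf_merge e L : (1 <= e)%nat -> pos_digits L -> cf_tail (1%nat :: e :: L) tau <= a ->
  forall c d, (1 <= c)%nat -> (1 <= d)%nat ->
  Titer a d (cf_tail (c :: d :: e :: L) tau) = cf_tail ((e + 1)%nat :: L) tau.
Proof.
  intros He HL Hle c d. revert c. induction d as [|d IH]; intros c Hc Hd; [lia|].
  rewrite Titer_S. destruct d as [|d].
  - apply T_cf_merge; auto.
  - rewrite T_cf_reduce by (try lia; constructor; auto).
    replace (S (S d) - 1)%nat with (S d) by lia. apply IH; lia.
Qed.

Lemma Titer_cf_last2 : a < cf_tail (1%nat :: nil) tau -> tau <= a ->
  forall c d, (1 <= c)%nat -> (1 <= d)%nat ->
  Titer a (d + 1) (cf_tail (c :: d :: nil) tau) = 1 - tau.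
Proof.
  intros Hlt Hle c d. revert c. induction d as [|d IH]; intros c Hc Hd; [lia|].
  rewrite Nat.add_1_r, Titer_S. destruct d as [|d].
  - rewrite T_cf_keep by auto. apply T_cf_last; auto.
  - rewrite T_cf_reduce by (try lia; constructor).
    replace (S (S d) - 1)%nat with (S d) by lia. rewrite <- Nat.add_1_r. apply IH; lia.
Qed.

Lemma Titer_cf_consume L : a < cf_tail (1%nat :: nil) tau -> tau <= a -> pos_digits L ->
  (forall i, (1 <= i < length L)%nat -> cf_tail (1%nat :: skipn i L) tau <= a) ->
  forall c, (1 <= c)%nat -> Titer a (fst (sum_alt L) + 1) (cf_tail (c :: L) tau) = 1 - tau.
Proof.
  intros Hlt Hle. remember (length L) as n eqn:En. revert L En.
  induction n as [n IH] using (well_founded_induction Wf_nat.lt_wf).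
  intros L En HL Hi c Hc. subst n.
  destruct L as [|d [|e L]].
  - apply T_cf_last; auto.
  - apply pos_digits_cons in HL as [Hd _]. replace (fst (sum_alt (d :: nil))) with d by (simpl; lia).
    apply Titer_cf_last2; auto.
  - apply pos_digits_cons in HL as [Hd HL]. apply pos_digits_cons in HL as [He HL].
    cbn [sum_alt]. destruct (sum_alt L) as [s1 s2] eqn:Es. simpl fst.
    replace (d + s1 + 1)%nat with ((s1 + 1) + d)%nat by lia.
    rewrite Titer_add, Titer_cf_merge; auto.
    + replace s1 with (fst (sum_alt L)) by now rewrite Es.
      apply (IH (length L)); auto; [simpl; lia | | lia].
      intros i Hi'. apply (Hi (S (S i))). simpl. lia.
    + apply (Hi 1%nat). simpl. lia.
Qed.

End Orbit.

Lemma orbits_meet W tau : pos_digits W -> W <> nil -> 0 < tau < cf_fix W ->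
  let a := cf_tail (1%nat :: W) tau in tau <= a ->
  (forall k, (1 <= k < length W)%nat -> cf_tail W tau <= cf_tail (skipn k W) tau) ->
  Titer a (fst (sum_alt W) + 1) a = 1 - tau /\
  Titer a (snd (sum_alt W) + 1) (1 - a) = 1 - tau.
Proof.
  intros HD Hne Htau a Hle Htails.
  pose proof (cf_fix_lt_1 W HD Hne).
  set (u := cf_tail W tau).
  assert (Hu : 0 < u < 1) by (split; [apply cf_tail_pos | apply cf_tail_lt_1]; auto; lra).
  assert (Hau : a = / (1 + u)) by reflexivity.
  assert (Ha : 1 / 2 < a < 1).
  { rewrite Hau. split; [replace (1 / 2) with (/ 2) by field | rewrite <- Rinv_1];
      apply Rinv_lt_contravar; lra. }
  assert (Htu : tau < u) by (apply lt_cf_tail_iff; auto; lra).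
  assert (Hlt : a < cf_tail (1%nat :: nil) tau).
  { rewrite Hau. apply Rinv_lt_contravar; simpl; nra. }
  assert (Hflips : forall i, (1 <= i < length W)%nat -> cf_tail (1%nat :: skipn i W) tau <= a).
  { intros i Hi. specialize (Htails i Hi).
    pose proof (cf_tail_pos (skipn i W) tau (pos_digits_skipn i W HD) ltac:(lra)).
    rewrite cf_tail_cons, Hau. change (INR 1) with 1. fold u in Htails. apply Rinv_le_contravar; lra. }
  split.
  - apply Titer_cf_consume; auto; lra.
  - destruct W as [|w W']; [congruence|]. apply pos_digits_cons in HD as [Hw HW'].
    assert (E : 1 - a = cf_tail ((w + 1)%nat :: W') tau).
    { rewrite Hau. unfold u. rewrite !cf_tail_cons, plus_INR. simpl.
      pose proof (cf_tail_pos W' tau HW' ltac:(lra)). pose proof (one_le_INR w Hw).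
      assert (0 < / (INR w + cf_tail W' tau)) by (apply Rinv_0_lt_compat; lra).
      field. split; lra. }
    cbn [sum_alt]. destruct (sum_alt W') as [s1 s2] eqn:Es. simpl snd.
    replace s1 with (fst (sum_alt W')) by now rewrite Es.
    rewrite E. apply Titer_cf_consume; auto; try lra; try lia.
    intros i Hi. apply (Hflips (S i)). simpl. lia.
Qed.

(** * Tails falling below periodic points *)

Lemma INR_plus_frac_inj m n x z : 0 <= x < 1 -> 0 <= z < 1 ->
  INR m + x = INR n + z -> m = n /\ x = z.
Proof.
  intros Hx Hz E. assert (F : flo (INR m + x) = flo (INR n + z)) by now rewrite E.
  rewrite !flo_INR_plus in F by auto. apply INR_eq in F. subst. split; auto. lra.
Qed.

Lemma cf_tail_eq_prefix V U y t : pos_digits V -> pos_digits U -> 0 <= y < 1 -> 0 < t < 1 ->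
  (length V <= length U)%nat -> cf_tail V y = cf_tail U t ->
  exists U2, U = V ++ U2 /\ y = cf_tail U2 t.
Proof.
  revert U. induction V as [|v V IH]; intros U HV HU Hy Ht Hl E; [exists U; auto|].
  destruct U as [|u U]; simpl in Hl; [lia|].
  apply pos_digits_cons in HV as [Hv HV]. apply pos_digits_cons in HU as [Hu HU].
  pose proof (one_le_INR v Hv). pose proof (one_le_INR u Hu).
  pose proof (cf_tail_nonneg V y HV ltac:(lra)). pose proof (cf_tail_le_1 V y HV ltac:(lra)).
  pose proof (cf_tail_pos U t HU ltac:(lra)). pose proof (cf_tail_lt_1 U t HU Ht).
  rewrite !cf_tail_cons in E. apply (f_equal Rinv) in E. rewrite !Rinv_inv in E.
  destruct (Req_dec (cf_tail V y) 1) as [A1|A1].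
  - (* v + 1 = u + f with 0 < f < 1 is impossible *)
    exfalso. rewrite A1 in E. replace (INR v + 1) with (INR (v + 1) + 0) in E by (rewrite plus_INR; simpl; ring).
    apply INR_plus_frac_inj in E; lra.
  - apply INR_plus_frac_inj in E as [-> E]; [|lra|lra].
    destruct (IH U HV HU Hy Ht ltac:(lia) E) as [U2 [-> HU2]].
    exists U2. split; auto.
Qed.

Lemma nonempty_length {A} (l : list A) : l <> nil -> (1 <= length l)%nat.
Proof. destruct l; simpl; [congruence | lia]. Qed.

Lemma firstn_app_le {A} k (p z : list A) : (k <= length p)%nat -> firstn k (p ++ z) = firstn k p.
Proof. intro H. now rewrite firstn_app, (proj2 (Nat.sub_0_le k _) H), firstn_O, app_nil_r. Qed.

Lemma skipn_app_le {A} k (p z : list A) : (k <= length p)%nat -> skipn k (p ++ z) = skipn k p ++ z.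
Proof. intro H. now rewrite skipn_app, (proj2 (Nat.sub_0_le k _) H). Qed.

Fixpoint rep (n : nat) (R : list nat) : list nat :=
  match n with O => nil | S n => R ++ rep n R end.

Lemma rep_comm n R : rep n R ++ R = R ++ rep n R.
Proof. induction n; simpl; [now rewrite app_nil_r | now rewrite <- app_assoc, IHn]. Qed.

Lemma length_rep n R : length (rep n R) = (n * length R)%nat.
Proof. induction n; simpl; auto. rewrite length_app, IHn. lia. Qed.

Lemma pos_digits_rep n R : pos_digits R -> pos_digits (rep n R).
Proof. intro H. induction n; simpl; [constructor | now apply pos_digits_app]. Qed.

Lemma cf_tail_rep_fix n R x : cf_tail R x = x -> cf_tail (rep n R) x = x.
Proof. intro H. induction n; simpl; auto. now rewrite cf_tail_app, IHn. Qed.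

Lemma rep_nonempty n R : R <> nil -> rep (S n) R <> nil.
Proof. intro H. simpl. destruct R; simpl; congruence. Qed.

Lemma cf_fix_rep n R : pos_digits R -> R <> nil -> cf_fix (rep (S n) R) = cf_fix R.
Proof.
  intros HD Hne. symmetry. apply cf_fix_unique; auto using pos_digits_rep, rep_nonempty.
  - left; apply cf_fix_pos; auto.
  - apply cf_tail_rep_fix, cf_fix_eq; auto.
Qed.

Lemma app_comm_rep : forall n R V Q, (length V <= n)%nat -> R ++ V = V ++ Q ->
  length R = length Q -> R <> nil -> exists V2 j, V = V2 ++ rep j Q /\ (length V2 < length R)%nat.
Proof.
  induction n as [|n IH]; intros R V Q Hn E HRQ HR.
  - destruct V; simpl in Hn; [|lia]. exists nil, O. split; [reflexivity|].
    now apply nonempty_length.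
  - destruct (Nat.lt_ge_cases (length V) (length R)) as [Hlt|Hge].
    + exists V, O. simpl. now rewrite app_nil_r.
    + (* R is a prefix of V: V = R ++ V' with R ++ V' = V' ++ Q *)
      assert (E1 : firstn (length R) (R ++ V) = firstn (length R) (V ++ Q)) by now rewrite E.
      rewrite !firstn_app_le, firstn_all in E1 by lia.
      set (V' := skipn (length R) V).
      assert (EV : V = R ++ V') by (unfold V'; rewrite E1 at 1; now rewrite firstn_skipn).
      assert (E2 : R ++ V' = V' ++ Q).
      { rewrite EV, <- app_assoc in E. now apply app_inv_head in E. }
      assert (HV' : (length V' <= n)%nat).
      { rewrite EV, length_app in Hn. pose proof (nonempty_length R HR). lia. }
      destruct (IH R V' Q HV' E2 HRQ HR) as [V2 [j [EV2 HV2]]].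
      exists V2, (S j). split; auto.
      rewrite EV, E2, EV2. simpl. now rewrite <- app_assoc, rep_comm.
Qed.

Definition tail_falls (W : list nat) (k : nat) (tau : R) : Prop :=
  (1 <= k)%nat /\ (k < length W)%nat /\ 0 <= tau <= cf_fix W /\
  cf_tail (skipn k W) tau < cf_fix (firstn k W).

Definition falls_free (W : list nat) (n : nat) : Prop :=
  forall k tau, (k < n)%nat -> ~ tail_falls W k tau.

Lemma tail_falls_of_split W P Z : pos_digits W -> W = P ++ Z -> P <> nil -> Z <> nil ->
  cf_fix Z < cf_fix W -> tail_falls W (length P) (cf_fix W).
Proof.
  intros HD EW HP HZ Hlt.
  assert (HDP : pos_digits P) by (rewrite EW in HD; now apply pos_digits_app in HD).
  assert (HDZ : pos_digits Z) by (rewrite EW in HD; now apply pos_digits_app in HD).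
  assert (HW : W <> nil) by (rewrite EW; destruct P; simpl; congruence).
  pose proof (cf_fix_pos W HD HW).
  assert (Ef : firstn (length P) W = P) by (rewrite EW, firstn_app_le, firstn_all; auto).
  assert (Es : skipn (length P) W = Z) by (rewrite EW, skipn_app_le, skipn_all; auto).
  unfold tail_falls. rewrite Ef, Es.
  split; [now apply nonempty_length|]. split.
  { rewrite EW, length_app. pose proof (nonempty_length Z HZ). lia. }
  split; [lra|].
  set (z := cf_tail Z (cf_fix W)).
  assert (Hz : z < cf_fix W) by (apply cf_tail_lt_iff; auto; lra).
  assert (HWz : cf_tail P z = cf_fix W).
  { unfold z. rewrite <- cf_tail_app, <- EW. apply cf_fix_eq; auto. }
  apply lt_cf_tail_iff; auto; [apply cf_tail_nonneg; auto; lra | lra].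
Qed.

(* If a proper tail V of W = R ++ V takes the same value as W at y, then W is, up to a
   prefix shorter than R, a power of a word whose periodic point is y. *)
Lemma tail_falls_of_shift W R V y : pos_digits W -> W = R ++ V -> R <> nil -> V <> nil ->
  0 < y < 1 -> cf_tail V y = cf_tail W y -> y < cf_fix W ->
  exists k, (k < length R)%nat /\ tail_falls W k (cf_fix W).
Proof.
  intros HD EW HR HV Hy E Hye.
  assert (HDV : pos_digits V) by (rewrite EW in HD; now apply pos_digits_app in HD).
  assert (Hlen : (length V <= length W)%nat) by (rewrite EW, length_app; lia).
  destruct (cf_tail_eq_prefix V W y y HDV HD ltac:(lra) Hy Hlen E) as [Q [EQ Hq]].
  assert (HDQ : pos_digits Q) by (rewrite EQ in HD; now apply pos_digits_app in HD).
  assert (HlQ : length Q = length R).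
  { apply (f_equal (@length nat)) in EQ. rewrite EW, !length_app in EQ. lia. }
  assert (HQ : Q <> nil) by (intros ->; destruct R; simpl in HlQ; [congruence | lia]).
  assert (HyQ : y = cf_fix Q) by (apply cf_fix_unique; auto; lra).
  destruct (app_comm_rep (length V) R V Q (le_n _) ltac:(now rewrite <- EW) ltac:(lia) HR)
    as [V2 [j [EV2 HV2]]].
  assert (EW2 : W = V2 ++ rep (S j) Q).
  { rewrite EQ, EV2. simpl. now rewrite <- app_assoc, rep_comm. }
  pose proof (cf_fix_rep j Q HDQ HQ) as Hrep.
  destruct V2 as [|v V2'].
  - rewrite EW2, app_nil_l, Hrep in Hye. lra.
  - exists (length (v :: V2')). split; [exact HV2|].
    apply tail_falls_of_split with (Z := rep (S j) Q); auto using rep_nonempty; [congruence|].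
    rewrite Hrep. lra.
Qed.

Section CommonPrefix.
Variables (R : list nat).
Hypothesis HDR : pos_digits R.
Hypothesis HR : R <> nil.

Lemma tail_ne_fix X Y y : pos_digits X -> X = R ++ Y -> Y <> nil ->
  falls_free X (length R) -> 0 < y < cf_fix X -> cf_tail Y y <> cf_fix R.
Proof.
  intros HX EX HY Hfree Hy EY.
  assert (HXne : X <> nil) by (rewrite EX; destruct R; simpl; congruence).
  pose proof (cf_fix_lt_1 X HX HXne).
  assert (E : cf_tail Y y = cf_tail X y) by (rewrite EX, cf_tail_app, EY; symmetry; apply cf_fix_eq; auto).
  destruct (tail_falls_of_shift X R Y y HX EX HR HY ltac:(lra) E ltac:(lra)) as [k [Hk Hf]].
  exact (Hfree k _ Hk Hf).
Qed.

Lemma tail_not_across_fix X Y s t : pos_digits X -> X = R ++ Y -> Y <> nil ->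
  falls_free X (length R) -> 0 <= s < t -> t <= cf_fix X ->
  ~ between (cf_tail Y s) (cf_tail Y t) (cf_fix R).
Proof.
  intros HX EX HY Hfree Hst Ht Hb.
  assert (HDY : pos_digits Y) by (rewrite EX in HX; now apply pos_digits_app in HX).
  destruct (cf_tail_ivt Y s t (cf_fix R) HDY Hst Hb) as [y [Hy Ey]].
  exact (tail_ne_fix X Y y HX EX HY Hfree ltac:(lra) Ey).
Qed.

Lemma cf_tail_0_ne_fix Y : pos_digits Y -> cf_tail Y 0 <> cf_fix R.
Proof.
  intros HDY E.
  pose proof (cf_fix_pos R HDR HR). pose proof (cf_fix_lt_1 R HDR HR).
  set (n := length Y).
  assert (Hn : (length Y <= length (rep n R))%nat).
  { rewrite length_rep. pose proof (nonempty_length R HR). unfold n. nia. }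
  assert (Er : cf_tail (rep n R) (cf_fix R) = cf_fix R) by (apply cf_tail_rep_fix, cf_fix_eq; auto).
  destruct (cf_tail_eq_prefix Y (rep n R) 0 (cf_fix R) HDY (pos_digits_rep n R HDR)
      ltac:(lra) ltac:(lra) Hn ltac:(now rewrite Er)) as [U [EU HU]].
  assert (HDU : pos_digits U).
  { pose proof (pos_digits_rep n R HDR) as K. rewrite EU in K. now apply pos_digits_app in K. }
  pose proof (cf_tail_pos U (cf_fix R) HDU ltac:(lra)). lra.
Qed.

Lemma tail_at_fix_le X Y : pos_digits X -> X = R ++ Y -> Y <> nil ->
  falls_free X (length R) -> cf_tail Y 0 < cf_fix R -> cf_tail Y (cf_fix X) <= cf_fix R.
Proof.
  intros HX EX HY Hfree H0.
  assert (HXne : X <> nil) by (rewrite EX; destruct R; simpl; congruence).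
  pose proof (cf_fix_pos X HX HXne).
  apply Rnot_lt_le. intro Hlt.
  apply (tail_not_across_fix X Y 0 (cf_fix X)); auto; [lra | lra | left; lra].
Qed.

Lemma common_prefix_tails_le W Ws V Vs tau : pos_digits W -> pos_digits Ws ->
  W = R ++ V -> Ws = R ++ Vs -> V <> nil -> Vs <> nil -> cf_tail V 0 = cf_tail Vs 0 ->
  falls_free W (length R) -> falls_free Ws (length R) ->
  0 <= tau <= cf_fix W -> cf_tail V tau < cf_fix R ->
  cf_tail V (cf_fix W) <= cf_fix R /\ cf_tail Vs (cf_fix Ws) <= cf_fix R.
Proof.
  intros HW HWs EW EWs HV HVs E0 Hfree Hfrees Htau Hlt.
  assert (HDV : pos_digits V) by (rewrite EW in HW; now apply pos_digits_app in HW).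
  assert (H0 : cf_tail V 0 < cf_fix R).
  { destruct (Rtotal_order (cf_tail V 0) (cf_fix R)) as [h|[h|h]]; auto.
    - exfalso. exact (cf_tail_0_ne_fix V HDV h).
    - exfalso. destruct (Req_dec tau 0) as [->|Htau0]; [lra|].
      apply (tail_not_across_fix W V 0 tau); auto; [lra | lra | right; lra]. }
  split; apply tail_at_fix_le; auto; congruence.
Qed.

End CommonPrefix.

(** * Quadratic intervals and maximality *)

Lemma valid_cf_digits l : valid_cf l -> pos_digits l.
Proof. intros [_ [H _]]. exact H. Qed.

Lemma valid_cf_nonempty l : valid_cf l -> l <> nil.
Proof. intros [H _]. exact H. Qed.

Lemma valid_cf_snoc l : valid_cf l -> exists p x, l = p ++ x :: nil /\ (2 <= x)%nat /\
  pos_digits p /\ alt_cf l = p ++ (x - 1)%nat :: 1%nat :: nil.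
Proof.
  intros [Hne [HF Hl]]. exists (removelast l), (last l 0%nat).
  assert (E : l = removelast l ++ last l 0%nat :: nil) by (apply app_removelast_last; auto).
  repeat split; auto. rewrite E in HF. now apply pos_digits_app in HF.
Qed.

Lemma cf_tail_split_last p x : (2 <= x)%nat ->
  cf_tail (p ++ (x - 1)%nat :: 1%nat :: nil) 0 = cf_tail (p ++ x :: nil) 0.
Proof.
  intro Hx. pose proof (two_le_INR x Hx). rewrite !cf_tail_app. f_equal.
  simpl. rewrite minus_INR by lia. simpl. field. lra.
Qed.

Lemma alt_cf_spec l : valid_cf l -> pos_digits (alt_cf l) /\ alt_cf l <> nil /\
  cf_fin (alt_cf l) = cf_fin l /\ length (alt_cf l) = S (length l).
Proof.
  intro Hv. destruct (valid_cf_snoc l Hv) as [p [x [E [Hx [Hp Ea]]]]].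
  rewrite Ea. repeat split.
  - apply pos_digits_app. split; auto. repeat constructor; lia.
  - destruct p; simpl; congruence.
  - unfold cf_fin. rewrite E. now apply cf_tail_split_last.
  - rewrite E, !length_app. simpl. lia.
Qed.

Lemma valid_cf_tail a r : valid_cf (a :: r) -> r <> nil -> valid_cf r.
Proof.
  intros [_ [HF Hl]] Hr. apply pos_digits_cons in HF as [_ HF].
  repeat split; auto. destruct r; [congruence | exact Hl].
Qed.

Lemma cf_fin_valid_bounds l : valid_cf l -> 0 < cf_fin l < 1.
Proof.
  induction l as [|a r IH]; intro Hv; [now destruct Hv|].
  pose proof Hv as [_ [HF Hl]]. apply pos_digits_cons in HF as [Ha HF].
  pose proof (one_le_INR a Ha).
  assert (Hsum : 1 < INR a + cf_fin r).
  { destruct r as [|b r].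
    - unfold cf_fin. simpl. pose proof (two_le_INR a Hl). lra.
    - pose proof (IH (valid_cf_tail a _ Hv ltac:(congruence))). lra. }
  unfold cf_fin in *. rewrite cf_tail_cons.
  split; [apply Rinv_0_lt_compat; lra|]. rewrite <- Rinv_1. apply Rinv_lt_contravar; lra.
Qed.

Lemma valid_cf_inj l1 l2 : valid_cf l1 -> valid_cf l2 -> cf_fin l1 = cf_fin l2 -> l1 = l2.
Proof.
  revert l2. induction l1 as [|a r1 IH]; intros l2 H1 H2 E; [now destruct H1|].
  destruct l2 as [|b r2]; [now destruct H2|].
  assert (Ha : (1 <= a)%nat) by (destruct H1 as [_ [HF _]]; now apply pos_digits_cons in HF).
  assert (Hb : (1 <= b)%nat) by (destruct H2 as [_ [HF _]]; now apply pos_digits_cons in HF).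
  assert (Frac : forall c r, valid_cf (c :: r) -> 0 <= cf_fin r < 1 /\ (cf_fin r = 0 -> r = nil)).
  { intros c [|d r] Hv; [unfold cf_fin; simpl; split; [lra | auto]|].
    pose proof (cf_fin_valid_bounds _ (valid_cf_tail c _ Hv ltac:(congruence))). split; lra. }
  destruct (Frac a r1 H1) as [A1 A2]. destruct (Frac b r2 H2) as [B1 B2].
  unfold cf_fin in E. rewrite !cf_tail_cons in E. apply (f_equal Rinv) in E.
  rewrite !Rinv_inv in E. apply INR_plus_frac_inj in E as [<- E]; auto.
  destruct r1 as [|c r1]; destruct r2 as [|d r2]; auto.
  - specialize (B2 (eq_sym E)). congruence.
  - specialize (A2 E). congruence.
  - f_equal. apply IH; auto; eapply valid_cf_tail; eauto; congruence.
Qed.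

Lemma is_rat_cf_fin l : is_rat (cf_fin l).
Proof.
  assert (Q2R0 : Q2R 0 = 0) by (unfold Q2R; simpl; ring).
  assert (Hnat : forall a, Q2R (inject_Z (Z.of_nat a)) = INR a).
  { intro a. unfold Q2R. simpl. rewrite Rinv_1, Rmult_1_r. symmetry. apply INR_IZR_INZ. }
  induction l as [|a l [q Hq]]; [exists 0%Q; exact Q2R0|].
  unfold cf_fin in *. rewrite cf_tail_cons, <- Hq, <- Hnat, <- Q2R_plus.
  destruct (Qeq_dec (inject_Z (Z.of_nat a) + q) 0) as [Z|Z].
  - (* both sides are 0, as / 0 = 0 *)
    exists 0%Q. now rewrite (Qeq_eqR _ _ Z), Q2R0, Rinv_0.
  - exists (/ (inject_Z (Z.of_nat a) + q))%Q. now rewrite Q2R_inv.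
Qed.

Lemma gold_spec : 0 < gold /\ gold * gold + gold = 1 /\ 1 / 2 < gold < 1.
Proof.
  unfold gold. assert (H5 : sqrt 5 * sqrt 5 = 5) by (apply sqrt_sqrt; lra).
  pose proof (sqrt_pos 5). assert (2 < sqrt 5 < 3) by nra. repeat split; lra.
Qed.

Lemma cf_fix_ones i : (1 <= i)%nat -> cf_fix (repeat 1%nat i) = gold.
Proof.
  intro Hi. destruct gold_spec as (G1 & G2 & G3).
  assert (Hrep : forall j, repeat 1%nat j = rep j (1%nat :: nil)) by (induction j; simpl; congruence).
  destruct i as [|i]; [lia|]. rewrite Hrep, cf_fix_rep by (repeat constructor || congruence).
  symmetry. apply cf_fix_unique; [repeat constructor | congruence | lra|].
  simpl. apply (Rmult_eq_reg_l (1 + gold)); [|lra]. rewrite Rinv_r by lra. lra.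
Qed.

Lemma qint_one t : qint 1 t <-> gold < t < 1.
Proof. unfold qint. destruct (Req_EM_T 1 1); [tauto | congruence]. Qed.

Lemma qint_valid l t : valid_cf l -> qint (cf_fin l) t <-> between (cf_fix l) (cf_fix (alt_cf l)) t.
Proof.
  intro Hv. pose proof (cf_fin_valid_bounds l Hv).
  pose proof (valid_cf_digits l Hv). pose proof (valid_cf_nonempty l Hv).
  destruct (alt_cf_spec l Hv) as (HDa & Hane & _ & _).
  unfold qint. destruct (Req_EM_T (cf_fin l) 1) as [h|h]; [lra|].
  rewrite <- (cf_per_eq_fix l), <- (cf_per_eq_fix (alt_cf l)), <- open_between_iff by auto.
  split.
  - intros [l0 [Hv0 [E0 Hb]]]. now rewrite <- (valid_cf_inj l0 l).
  - intro Hb. exists l. auto.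
Qed.

Lemma between_fix_alt_fin l : valid_cf l -> between (cf_fix l) (cf_fix (alt_cf l)) (cf_fin l).
Proof.
  intro Hv. destruct (alt_cf_spec l Hv) as (HDa & Hane & Ef & El).
  pose proof (valid_cf_digits l Hv) as HD. pose proof (valid_cf_nonempty l Hv) as Hne.
  pose proof (cf_fix_pos l HD Hne) as P1. pose proof (cf_fix_pos _ HDa Hane) as P2.
  pose proof (cf_fix_eq l HD Hne) as F1. pose proof (cf_fix_eq _ HDa Hane) as F2.
  pose proof (cf_tail_strict l 0 (cf_fix l) HD ltac:(lra)) as M1.
  pose proof (cf_tail_strict (alt_cf l) 0 (cf_fix (alt_cf l)) HDa ltac:(lra)) as M2.
  rewrite El, Nat.even_succ, <- Nat.negb_even in M2.
  unfold cf_fin in Ef. rewrite Ef, F1 in *. rewrite F2 in M2. unfold cf_fin, between.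
  destruct (Nat.even (length l)); simpl in M2; lra.
Qed.

Lemma valid_cf_of_digits R : pos_digits R -> R <> nil -> R <> 1%nat :: nil ->
  exists l, valid_cf l /\ cf_fin l = cf_fin R /\ (cf_fix l = cf_fix R \/ cf_fix (alt_cf l) = cf_fix R).
Proof.
  intros HD Hne H1.
  pose proof (app_removelast_last 0%nat Hne) as E.
  set (q := removelast R) in *. set (c := last R 0%nat) in *.
  assert (Hqc : pos_digits q /\ pos_digits (c :: nil)) by (apply pos_digits_app; now rewrite <- E).
  destruct Hqc as [Hq Hc]. apply pos_digits_cons in Hc as [Hc _].
  destruct (Nat.le_gt_cases 2 c) as [Hc2|Hc2].
  - exists R. repeat split; auto.
  - (* R ends in 1: it is the alternative expansion of q' ++ [d + 1] *)
    replace c with 1%nat in E by lia.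
    destruct q as [|d q'] using rev_ind; [simpl in E; congruence|].
    apply pos_digits_app in Hq as [Hq' Hd]. apply pos_digits_cons in Hd as [Hd _].
    assert (Hv : valid_cf (q' ++ S d :: nil)).
    { repeat split; [destruct q'; simpl; congruence | | rewrite last_last; lia].
      apply pos_digits_app. split; auto. repeat constructor; lia. }
    assert (Ea : alt_cf (q' ++ S d :: nil) = R).
    { unfold alt_cf. rewrite removelast_last, last_last, E, <- app_assoc. simpl. now rewrite Nat.sub_0_r. }
    destruct (alt_cf_spec _ Hv) as (_ & _ & Ef & _). rewrite Ea in Ef.
    exists (q' ++ S d :: nil). split; [exact Hv|]. split; [auto | right; congruence].
Qed.

Lemma qint_cf_tail R y : pos_digits R -> R <> nil -> 0 < y < cf_fix R ->
  qint (cf_fin R) (cf_tail R y).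
Proof.
  intros HD Hne Hy.
  assert (B : between (cf_fin R) (cf_fix R) (cf_tail R y)).
  { unfold cf_fin. rewrite <- (cf_fix_eq R HD Hne) at 1.
    apply cf_tail_between; auto; try lra. unfold between; lra. }
  destruct (list_eq_dec Nat.eq_dec R (1%nat :: nil)) as [->|E1].
  - unfold cf_fin in *. simpl in *. rewrite Rplus_0_r, Rinv_1 in *.
    apply qint_one. pose proof (cf_fix_ones 1 ltac:(lia)) as G. simpl in G. rewrite G in B.
    destruct gold_spec as (G1 & G2 & G3).
    unfold between in B. lra.
  - destruct (valid_cf_of_digits R HD Hne E1) as [l [Hv [Ef Eor]]].
    rewrite <- Ef. apply qint_valid; auto.
    pose proof (between_fix_alt_fin l Hv) as Bl. rewrite Ef in Bl.
    unfold between in *. destruct Eor as [E|E]; rewrite E in *; lra.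
Qed.

(* Both periodic endpoints of I_l inside the image of (0, [overline R]] under [R, .] would
   make I_l a proper subinterval of I_R. *)
Lemma not_in_calR_of_prefix l R u1 u2 : valid_cf l -> pos_digits R -> R <> nil ->
  0 < u1 <= cf_fix R -> 0 < u2 <= cf_fix R ->
  cf_fix l = cf_tail R u1 -> cf_fix (alt_cf l) = cf_tail R u2 -> ~ in_calR (cf_fin l).
Proof.
  intros Hv HD Hne Hu1 Hu2 E1 E2 [_ Hmax].
  assert (Hqb : quad_dom (cf_fin R)).
  { split; [apply is_rat_cf_fin|]. split; [apply cf_tail_pos_nonempty | apply cf_tail_le_1]; auto; lra. }
  assert (Sub : forall t, qint (cf_fin l) t -> qint (cf_fin R) t).
  { intros t Ht. apply qint_valid in Ht; auto. rewrite E1, E2 in Ht.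
    destruct (Rtotal_order u1 u2) as [h|[<-|h]]; [| unfold between in Ht; lra |].
    - destruct (cf_tail_ivt R u1 u2 t HD ltac:(lra) Ht) as [y [Hy <-]]. apply qint_cf_tail; auto; lra.
    - destruct (cf_tail_ivt R u2 u1 t HD ltac:(lra) (between_sym _ _ _ Ht)) as [y [Hy <-]].
      apply qint_cf_tail; auto; lra. }
  set (u0 := Rmin u1 u2 / 2).
  assert (Hu0 : 0 < u0 < Rmin u1 u2) by (unfold u0, Rmin; destruct (Rle_dec u1 u2); lra).
  assert (Hin : qint (cf_fin R) (cf_tail R u0)).
  { apply qint_cf_tail; auto. unfold Rmin in Hu0. destruct (Rle_dec u1 u2); lra. }
  pose proof (Hmax (cf_fin R) Hqb Sub (cf_tail R u0) Hin) as Hl.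
  apply qint_valid in Hl; auto. rewrite E1, E2 in Hl.
  apply cf_tail_between in Hl; try lra; auto.
  unfold between, Rmin in *. destruct (Rle_dec u1 u2); lra.
Qed.

Lemma cf_fix_le_half W : pos_digits W -> W <> nil -> (2 <= hd 0%nat W)%nat -> cf_fix W <= 1 / 2.
Proof.
  intros HD Hne Hh. pose proof (cf_fix_pos W HD Hne). rewrite <- (cf_fix_eq W HD Hne).
  destruct W as [|w W]; [congruence|]. simpl in Hh. apply pos_digits_cons in HD as [Hw HW].
  pose proof (cf_tail_cons_bounds w W (cf_fix (w :: W)) Hw HW ltac:(lra)). pose proof (two_le_INR w Hh).
  assert (/ INR w <= / 2) by (apply Rinv_le_contravar; lra). lra.
Qed.

Lemma split_leading_ones l : pos_digits l -> (exists x, In x l /\ (2 <= x)%nat) ->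
  exists i d rest, l = repeat 1%nat i ++ d :: rest /\ (2 <= d)%nat.
Proof.
  induction l as [|a l IH]; intros HD [x [Hx H2]]; [destruct Hx|].
  apply pos_digits_cons in HD as [Ha HD].
  destruct (Nat.le_gt_cases 2 a) as [h|h]; [now exists O, a, l|].
  replace a with 1%nat in * by lia. destruct Hx as [Hx|Hx]; [lia|].
  destruct (IH HD (ex_intro _ x (conj Hx H2))) as [i [d [rest [E Hd]]]].
  exists (S i), d, rest. now rewrite E.
Qed.

(* A leading block of ones has periodic point g > 1/2, above any tail starting with a digit >= 2. *)
Lemma lead_one_falls l : valid_cf l -> hd 0%nat l = 1%nat -> exists i, tail_falls l i 0.
Proof.
  intros Hv Hh. pose proof (valid_cf_digits l Hv) as HD. pose proof (valid_cf_nonempty l Hv) as Hne.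
  destruct Hv as (_ & _ & Hl).
  destruct (split_leading_ones l HD) as [i [d [rest [E Hd]]]].
  { exists (last l 0%nat). split; auto. rewrite (app_removelast_last 0%nat Hne) at 2.
    apply in_or_app. right. now left. }
  assert (Hi : (1 <= i)%nat) by (destruct i; [rewrite E in Hh; simpl in Hh; lia | lia]).
  assert (Hlen : length (repeat 1%nat i) = i) by apply repeat_length.
  exists i. unfold tail_falls.
  rewrite E, firstn_app_le, skipn_app_le, firstn_all2, skipn_all2, cf_fix_ones by lia. simpl app.
  rewrite <- E. split; [exact Hi|]. split; [rewrite E, length_app; simpl; lia|].
  split; [pose proof (cf_fix_pos l HD Hne); lra|].
  assert (HDr : pos_digits rest).
  { rewrite E in HD. apply pos_digits_app in HD as [_ K]. now apply pos_digits_cons in K. }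
  pose proof (cf_tail_cons_bounds d rest 0 ltac:(lia) HDr ltac:(lra)). pose proof (two_le_INR d Hd).
  assert (/ INR d <= / 2) by (apply Rinv_le_contravar; lra). destruct gold_spec as (G1 & G2 & G3). lra.
Qed.

Section Maximal.
Variable l : list nat.
Hypothesis Hv : valid_cf l.
Hypothesis Hmax : in_calR (cf_fin l).

Lemma no_prefix_falls W Ws p Z Zs k tau :
  W = l /\ Ws = alt_cf l \/ W = alt_cf l /\ Ws = l ->
  W = p ++ Z -> Ws = p ++ Zs -> Z <> nil -> Zs <> nil -> cf_tail Z 0 = cf_tail Zs 0 ->
  (k <= length p)%nat -> falls_free W k -> falls_free Ws k -> ~ tail_falls W k tau.
Proof.
  intros Hpair EW EWs HZ HZs EZ Hk Hfree Hfrees (Hk1 & _ & Htau & Hlt).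
  destruct (alt_cf_spec l Hv) as (HDa & _).
  assert (HW : pos_digits W /\ pos_digits Ws)
    by (pose proof (valid_cf_digits l Hv); destruct Hpair as [[-> ->]|[-> ->]]; auto).
  destruct HW as [HW HWs].
  set (R := firstn k p). set (V := skipn k p ++ Z). set (Vs := skipn k p ++ Zs).
  assert (HlR : length R = k) by (unfold R; rewrite length_firstn; lia).
  assert (HR : R <> nil) by (intro E; rewrite E in HlR; simpl in HlR; lia).
  assert (EW' : W = R ++ V) by (unfold R, V; now rewrite app_assoc, firstn_skipn).
  assert (EWs' : Ws = R ++ Vs) by (unfold R, Vs; now rewrite app_assoc, firstn_skipn).
  assert (HDR : pos_digits R) by (rewrite EW' in HW; now apply pos_digits_app in HW).
  assert (HV : V <> nil) by (unfold V; destruct (skipn k p); simpl; congruence).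
  assert (HVs : Vs <> nil) by (unfold Vs; destruct (skipn k p); simpl; congruence).
  assert (E0 : cf_tail V 0 = cf_tail Vs 0) by (unfold V, Vs; now rewrite !cf_tail_app, EZ).
  rewrite EW, firstn_app_le, skipn_app_le in Hlt by lia. fold R V in Hlt.
  rewrite <- HlR in Hfree, Hfrees.
  destruct (common_prefix_tails_le R HDR HR W Ws V Vs tau HW HWs EW' EWs' HV HVs E0
    Hfree Hfrees Htau Hlt) as [C1 C2].
  assert (Hfix : forall X Y, pos_digits X -> X = R ++ Y ->
            0 < cf_tail Y (cf_fix X) /\ cf_fix X = cf_tail R (cf_tail Y (cf_fix X))).
  { intros X Y HX EX. assert (X <> nil) by (rewrite EX; destruct R; simpl; congruence).
    assert (HY : pos_digits Y) by (rewrite EX in HX; now apply pos_digits_app in HX).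
    split; [apply cf_tail_pos, cf_fix_pos; auto|].
    rewrite <- cf_tail_app, <- EX. symmetry. apply cf_fix_eq; auto. }
  destruct (Hfix W V HW EW') as [P1 F1]. destruct (Hfix Ws Vs HWs EWs') as [P2 F2].
  destruct Hpair as [[-> ->]|[-> ->]].
  - exact (not_in_calR_of_prefix l R _ _ Hv HDR HR (conj P1 C1) (conj P2 C2) F1 F2 Hmax).
  - exact (not_in_calR_of_prefix l R _ _ Hv HDR HR (conj P2 C2) (conj P1 C1) F2 F1 Hmax).
Qed.

Lemma no_last_falls_alt tau : falls_free l (length l) -> ~ tail_falls (alt_cf l) (length l) tau.
Proof.
  intros Hfree (_ & _ & Htau & Hlt).
  destruct (alt_cf_spec l Hv) as (HDa & Hane & _).
  destruct (valid_cf_snoc l Hv) as [p [x [El [Hx [Hp Ea]]]]].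
  set (R := p ++ (x - 1)%nat :: nil).
  assert (ER : alt_cf l = R ++ 1%nat :: nil) by (rewrite Ea; unfold R; now rewrite <- app_assoc).
  assert (HlR : length l = length R) by (rewrite El; unfold R; now rewrite !length_app).
  rewrite HlR, ER, firstn_app_le, skipn_app_le, firstn_all, skipn_all, app_nil_l in Hlt by lia.
  assert (HDR : pos_digits R) by (rewrite ER in HDa; now apply pos_digits_app in HDa).
  assert (HR : R <> nil) by (unfold R; destruct p; simpl; congruence).
  pose proof (cf_fix_lt_1 _ HDa Hane).
  assert (Hhalf : 1 / 2 < cf_tail (1%nat :: nil) tau).
  { simpl. replace (1 / 2) with (/ 2) by field. apply Rinv_lt_contravar; lra. }
  destruct (Nat.le_gt_cases 2 (hd 0%nat R)) as [h2|h2].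
  { pose proof (cf_fix_le_half R HDR HR h2). lra. }
  destruct p as [|a p'].
  - (* l = [2], alt_cf l = [1; 1] *)
    simpl in h2. assert (x = 2%nat) by lia. subst x R. rewrite Ea in Htau. simpl in Hlt.
    pose proof (cf_fix_ones 1 ltac:(lia)) as E1. pose proof (cf_fix_ones 2 ltac:(lia)) as E2.
    simpl in E1, E2, Htau. rewrite E1 in Hlt. rewrite E2 in Htau.
    destruct gold_spec as (G1 & G2 & G3).
    assert (/ (1 + gold) <= / (1 + tau)) by (apply Rinv_le_contravar; lra).
    assert (/ (1 + gold) = gold) by (apply (Rmult_eq_reg_l (1 + gold)); [rewrite Rinv_r; lra | lra]).
    lra.
  - simpl in h2. replace a with 1%nat in * by (apply pos_digits_cons in Hp; lia).
    destruct (lead_one_falls l Hv ltac:(now rewrite El)) as [i Fi].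
    pose proof Fi as (_ & Hi & _). exact (Hfree i 0 Hi Fi).
Qed.

Lemma calR_falls_free n : falls_free l n /\ falls_free (alt_cf l) n.
Proof.
  destruct (valid_cf_snoc l Hv) as [p [x [El [Hx [Hp Ea]]]]].
  assert (EZ : cf_tail (x :: nil) 0 = cf_tail ((x - 1)%nat :: 1%nat :: nil) 0)
    by (symmetry; exact (cf_tail_split_last nil x Hx)).
  assert (Hlen : length l = S (length p)) by (rewrite El, length_app; simpl; lia).
  induction n as [|n [IHl IHa]]; [split; intros k t Hk; lia|].
  assert (Hl : forall tau, ~ tail_falls l n tau).
  { intros tau Hf. pose proof Hf as (_ & Hn & _).
    apply (no_prefix_falls l (alt_cf l) p (x :: nil) ((x - 1)%nat :: 1%nat :: nil) n tau);
      auto; congruence || lia. }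
  split; intros k tau Hk Hf; destruct (Nat.eq_dec k n) as [->|Hkn].
  - exact (Hl tau Hf).
  - exact (IHl k tau ltac:(lia) Hf).
  - pose proof Hf as (_ & Hn & _).
    destruct (Nat.le_gt_cases n (length p)) as [Hnp|Hnp].
    + apply (no_prefix_falls (alt_cf l) l p ((x - 1)%nat :: 1%nat :: nil) (x :: nil) n tau);
        auto; congruence.
    + rewrite Ea, length_app in Hn. simpl in Hn.
      replace n with (length l) in * by lia. exact (no_last_falls_alt tau IHl Hf).
  - exact (IHa k tau ltac:(lia) Hf).
Qed.

Lemma calR_head_ge_2 : (2 <= hd 0%nat l)%nat.
Proof.
  assert (Hh1 : (1 <= hd 0%nat l)%nat).
  { pose proof (valid_cf_digits l Hv) as HD. pose proof (valid_cf_nonempty l Hv) as Hne.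
    clear - HD Hne. destruct l as [|a r]; [congruence|]. now apply pos_digits_cons in HD. }
  destruct (Nat.le_gt_cases 2 (hd 0%nat l)) as [h|h]; [exact h|exfalso].
  destruct (lead_one_falls l Hv ltac:(lia)) as [i Fi].
  exact (proj1 (calR_falls_free (S i)) i 0 ltac:(lia) Fi).
Qed.

End Maximal.

(** * The orbit identity *)

Lemma cf_tail_le_shift W tau : pos_digits W -> falls_free W (length W) -> 0 <= tau <= cf_fix W ->
  forall k, (1 <= k < length W)%nat -> cf_tail W tau <= cf_tail (skipn k W) tau.
Proof.
  intros HD Hfree Htau k Hk.
  set (R := firstn k W). set (V := skipn k W).
  assert (HR : R <> nil) by (unfold R; destruct W; [simpl in Hk; lia | destruct k; [lia | discriminate]]).
  assert (HDR : pos_digits R) by now apply pos_digits_firstn.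
  assert (Hu : 0 <= cf_tail V tau) by (apply cf_tail_nonneg; [apply pos_digits_skipn | lra]; auto).
  assert (Hge : cf_fix R <= cf_tail V tau).
  { apply Rnot_lt_le. intro Hlt. apply (Hfree k tau ltac:(lia)).
    split; [lia|]. split; [lia|]. split; [lra | exact Hlt]. }
  replace (cf_tail W tau) with (cf_tail R (cf_tail V tau))
    by (unfold R, V; now rewrite <- cf_tail_app, firstn_skipn).
  destruct (Req_dec (cf_fix R) (cf_tail V tau)) as [<-|h].
  - rewrite cf_fix_eq; auto. lra.
  - left. apply cf_tail_lt_iff; auto. lra.
Qed.

(* Every alpha in the interval is [1, W, tau] for some tau in (0, [overline W]). *)
Lemma orbit_identity W a : pos_digits W -> W <> nil -> falls_free W (length W) ->
  (forall tau, 0 < tau < cf_fix W -> tau <= cf_tail (1%nat :: W) tau) ->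
  between (cf1_per W) (cf1_fin W) a ->
  Titer a (fst (sum_alt W) + 1) a = Titer a (snd (sum_alt W) + 1) (1 - a).
Proof.
  intros HD Hne Hfree Hself Hb. pose proof (cf_fix_pos W HD Hne).
  assert (E1 : cf1_per W = cf_tail (1%nat :: W) (cf_fix W)).
  { unfold cf1_per. rewrite cf_per_eq_fix by auto. simpl. now rewrite cf_fix_eq. }
  unfold cf1_fin, cf_fin in Hb. rewrite E1 in Hb.
  assert (HD1 : pos_digits (1%nat :: W)) by now constructor.
  destruct (cf_tail_ivt (1%nat :: W) 0 (cf_fix W) a HD1 ltac:(lra) (between_sym _ _ _ Hb))
    as [tau [Htau <-]].
  destruct (orbits_meet W tau HD Hne Htau) as [O1 O2].
  - apply Hself. lra.
  - apply cf_tail_le_shift; auto. lra.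
  - now rewrite O1, O2.
Qed.

Lemma self_le_cf_tail_head_ge_2 W tau : pos_digits W -> W <> nil -> (2 <= hd 0%nat W)%nat ->
  0 < tau < cf_fix W -> tau <= cf_tail (1%nat :: W) tau.
Proof.
  intros HD Hne Hh Htau. pose proof (cf_fix_le_half W HD Hne Hh).
  pose proof (cf_tail_nonneg W tau HD ltac:(lra)). pose proof (cf_tail_le_1 W tau HD ltac:(lra)).
  rewrite cf_tail_cons. change (INR 1) with 1.
  assert (/ 2 <= / (1 + cf_tail W tau)) by (apply Rinv_le_contravar; lra). lra.
Qed.

Lemma self_le_cf_tail_ones n tau : (1 <= n)%nat -> 0 <= tau < gold ->
  tau <= cf_tail (repeat 1%nat n) tau.
Proof.
  intros Hn Htau. left. apply lt_cf_tail_iff; try lra.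
  - apply List.Forall_forall. intros x Hx. apply repeat_spec in Hx. lia.
  - destruct n; [lia | discriminate].
  - now rewrite cf_fix_ones.
Qed.

Lemma golden_orbit_identity alpha : 1 / 2 < alpha < gold ->
  Titer alpha (1 + 1) alpha = Titer alpha (2 - 1) (1 - alpha).
Proof.
  intro Ha. destruct gold_spec as (G1 & G2 & G3).
  assert (HD : pos_digits (1%nat :: nil)) by repeat constructor.
  assert (Hfix : cf_fix (1%nat :: nil) = gold) by exact (cf_fix_ones 1 ltac:(lia)).
  apply (orbit_identity (1%nat :: nil)); auto; [congruence | | |].
  - intros k t Hk [Hk1 _]. simpl in Hk. lia.
  - intros tau Htau. rewrite Hfix in Htau. apply (self_le_cf_tail_ones 2); [lia | lra].
  - unfold cf1_per, cf1_fin, cf_fin. rewrite cf_per_eq_fix, Hfix by (auto; congruence).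
    assert (Eg : / (1 + gold) = gold) by (apply (Rmult_eq_reg_l (1 + gold)); [rewrite Rinv_r; lra | lra]).
    simpl. rewrite Rplus_0_r, Rinv_1, Eg. unfold between. lra.
Qed.

Lemma calR_orbit_identity l W a : valid_cf l -> in_calR (cf_fin l) ->
  W = l \/ W = alt_cf l -> between (cf1_per W) (cf1_fin W) a ->
  Titer a (fst (sum_alt W) + 1) a = Titer a (snd (sum_alt W) + 1) (1 - a).
Proof.
  intros Hv Hmax HW Hb.
  pose proof (calR_head_ge_2 l Hv Hmax) as Hh.
  destruct (alt_cf_spec l Hv) as (HDa & Hane & _).
  destruct (valid_cf_snoc l Hv) as [p [x [El [Hx [Hp Ea]]]]].
  destruct HW as [->| ->]; apply orbit_identity; auto using valid_cf_digits, valid_cf_nonempty;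
    try apply (calR_falls_free l Hv Hmax).
  - intros tau. apply self_le_cf_tail_head_ge_2; auto using valid_cf_digits, valid_cf_nonempty.
  - intros tau Htau. rewrite Ea in *. destruct p as [|b p].
    + (* alt_cf [x] = [x - 1; 1]: head 1 only for x = 2, where the expansion is [1; 1] *)
      destruct (Nat.eq_dec x 2) as [->|Hx2].
      * pose proof (cf_fix_ones 2 ltac:(lia)) as E2. simpl in E2, Htau. rewrite E2 in Htau. apply (self_le_cf_tail_ones 3); [lia | lra].
      * apply self_le_cf_tail_head_ge_2; auto. simpl. lia.
    + apply self_le_cf_tail_head_ge_2; auto. rewrite El in Hh. exact Hh.
Qed.

Lemma sum_alt_app p z :
  fst (sum_alt (p ++ z)) = (fst (sum_alt p) +
    if Nat.even (length p) then fst (sum_alt z) else snd (sum_alt z))%nat /\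
  snd (sum_alt (p ++ z)) = (snd (sum_alt p) +
    if Nat.even (length p) then snd (sum_alt z) else fst (sum_alt z))%nat.
Proof.
  induction p as [|a p IH]; [auto|].
  cbn [length app sum_alt]. rewrite Nat.even_succ, <- Nat.negb_even.
  destruct (sum_alt (p ++ z)) as [s1 s2], (sum_alt p) as [t1 t2]. simpl in *.
  destruct (Nat.even (length p)); simpl; lia.
Qed.

(* J_a^L and J_a^R are the intervals of [calR_orbit_identity] for the two expansions of a,
   assigned according to the parity of n. *)
Lemma M_N_J_of_expansions l : valid_cf l ->
  let WL := if Nat.odd (length l) then alt_cf l else l in
  let WR := if Nat.odd (length l) then l else alt_cf l in
  (M_of l = fst (sum_alt WL) + 1 /\ N_of l = snd (sum_alt WL) + 1)%nat /\
  (M_of l + 1 = fst (sum_alt WR) + 1 /\ N_of l - 1 = snd (sum_alt WR) + 1)%nat /\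
  (forall a, JL l a -> between (cf1_per WL) (cf1_fin WL) a) /\
  (forall a, JR l a -> between (cf1_per WR) (cf1_fin WR) a).
Proof.
  intros Hv WL WR. destruct (valid_cf_snoc l Hv) as [p [x [El [Hx [_ Ea]]]]].
  destruct (sum_alt_app p (x :: nil)) as [S1 S2].
  destruct (sum_alt_app p ((x - 1)%nat :: 1%nat :: nil)) as [A1 A2].
  rewrite <- El in S1, S2. rewrite <- Ea in A1, A2. simpl in S1, S2, A1, A2.
  assert (Hodd : Nat.odd (length l) = Nat.even (length p))
    by (rewrite El, length_app, Nat.add_1_r, Nat.odd_succ; reflexivity).
  unfold WL, WR, JL, JR, M_of, N_of. rewrite Hodd in *.
  destruct (Nat.even (length p)); repeat split; try lia;
    intros a Ha; apply open_between_iff in Ha; auto using between_sym.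
Qed.

Theorem theorem3p5 :
  (* a = 1 : J_1^L is empty, J_1^R = (1/2, g), M = 1, N = 2 *)
  (in_calR 1 ->
     forall alpha, 1 / 2 < alpha < gold ->
       Titer alpha (1 + 1) alpha = Titer alpha (2 - 1) (1 - alpha)) /\
  (* a = [a1,...,an] with a_n >= 2 *)
  (forall l : list nat, valid_cf l -> in_calR (cf_fin l) ->
     (forall alpha, JL l alpha ->
        Titer alpha (M_of l) alpha = Titer alpha (N_of l) (1 - alpha)) /\
     (forall alpha, JR l alpha ->
        Titer alpha (M_of l + 1) alpha = Titer alpha (N_of l - 1) (1 - alpha))).
Proof.
  split.
  - intros _. exact golden_orbit_identity.
  - intros l Hv Hmax.
    destruct (M_N_J_of_expansions l Hv) as ([HM HN] & [HM' HN'] & HJL & HJR).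
    rewrite HM', HN', HM, HN.
    split; intros a Ha; apply (calR_orbit_identity l); auto;
      destruct (Nat.odd (length l)); auto.
Qed.
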